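(* Let $n\geqslant2$, $\lambda>0$, distinct points $p_1,\ldots,p_M\in\mathbb{Z}^n$ and positive integers $n_1,\ldots,n_M$ be given, and let $g=4\pi\sum_{j=1}^Mn_j\delta_{p_j}$. Let $\Omega_0\subset\mathbb{Z}^n$ be a finite set containing $\{p_j\}_{j=1}^M$ and let $\Omega$ be a finite connected subset with $\Omega_0\subset\Omega$. Fix $K>2\lambda$, let $u_0=0$ and for $k\geqslant1$ let $u_k:\overline\Omega\to\mathbb{R}$ be the (unique) solution of $$(\Delta-K)u_k=\lambda e^{u_{k-1}}(e^{u_{k-1}}-1)+g-Ku_{k-1}\ \text{ on }\Omega,\qquad u_k=0\ \text{ on }\delta\Omega,$$ and let $u_\Omega=\lim_{k\to\infty}u_k$ (pointwise limit, which exists and is finite). Then for any function $V:\overline\Omega\to\mathbb{R}$ satisfying $$\Delta V\geqslant\lambda e^V(e^V-1)+g\ \text{ on }\Omega,\qquad V\leqslant0\ \text{ on }\delta\Omega,$$ we have $0=u_0\geqslant u_1\geqslant\cdots\geqslant u_k\geqslant\cdots\geqslant u_\Omega\geqslant V$ on $\overline\Omega$.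
   Context: $\mathbb{Z}^n$ is the integer lattice graph with $x\sim y$ iff $\sum_i|x_i-y_i|=1$. For a finite $\Omega\subset\mathbb{Z}^n$, $\delta\Omega=\{y\in\mathbb{Z}^n\setminus\Omega:\exists x\in\Omega,\ y\sim x\}$ and $\overline\Omega=\Omega\cup\delta\Omega$. For $u:\overline\Omega\to\mathbb{R}$ and $x\in\Omega$, $\Delta u(x)=\sum_{y\sim x}(u(y)-u(x))$. $\delta_p$ is the function equal to $1$ at $p$ and $0$ elsewhere. *)

From HB Require Import structures.
From mathcomp Require Import all_boot all_order all_algebra.
From mathcomp Require Import all_classical all_reals all_analysis.
Set Implicit Arguments. Unset Strict Implicit. Unset Printing Implicit Defensive.
Import Order.TTheory GRing.Theory Num.Theory.
Local Open Scope ring_scope.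

Definition zpt (n : nat) := 'rV[int]_n.

Definition zadj (n : nat) (x y : zpt n) : bool :=
  (\sum_(i < n) `|x 0 i - y 0 i|) == 1.

(* The 2n lattice neighbours x +- e_i of x (exactly the y with zadj x y). *)
Definition znbrs (n : nat) (x : zpt n) : seq (zpt n) :=
  [seq x + delta_mx 0 i | i <- enum 'I_n] ++ [seq x - delta_mx 0 i | i <- enum 'I_n].

Definition zbdry (n : nat) (Om : seq (zpt n)) (y : zpt n) : bool :=
  (y \notin Om) && has (fun x => zadj x y) Om.

Definition zclos (n : nat) (Om : seq (zpt n)) (y : zpt n) : bool :=
  (y \in Om) || zbdry Om y.

Definition zconnected (n : nat) (Om : seq (zpt n)) : Prop :=
  forall x y, x \in Om -> y \in Om ->
    exists s : seq (zpt n), [&& path (@zadj n) x s, last x s == y & all (mem Om) s].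

Definition zlap (R : realType) (n : nat) (u : zpt n -> R) (x : zpt n) : R :=
  \sum_(y <- znbrs x) (u y - u x).

Definition gsrc (R : realType) (n M : nat) (p : 'I_M -> zpt n) (nn : 'I_M -> nat)
  (x : zpt n) : R :=
  4 * pi * \sum_(j < M) ((nn j)%:R * (x == p j)%:R).

From HB Require Import structures.
From mathcomp Require Import all_boot all_order all_algebra.
From mathcomp Require Import all_classical all_reals all_analysis.
From mathcomp Require Import ring lra.
Set Implicit Arguments. Unset Strict Implicit. Unset Printing Implicit Defensive.
Import Order.TTheory GRing.Theory Num.Theory numFieldNormedType.Exports.
Local Open Scope ring_scope.
Local Open Scope classical_set_scope.

(* Since K > 2 lambda, t |-> lambda e^t (e^t - 1) - K t is nonincreasing on
   (-oo, 0], so the operator Delta - K together with the maximum principle on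
   the finite set Omega turns each iteration step into a comparison: an
   induction gives u_(k+1) <= u_k <= 0 and V <= u_k, and both inequalities
   pass to the pointwise limit. *)

Lemma seq_argmax (T : eqType) d (L : orderType d) (F : T -> L) (s : seq T) :
  s != [::] -> exists2 x, x \in s & forall y, y \in s -> (F y <= F x)%O.
Proof.
elim: s => // a s IH _; have [->|/IH[b bs Fb]] := eqVneq s [::].
  by exists a; rewrite ?mem_head // => y; rewrite inE => /eqP ->.
have [Fab|Fba] := leP (F a) (F b).
  by exists b => [|y]; rewrite inE ?bs ?orbT // => /predU1P[->|/Fb].
exists a => [|y]; first exact: mem_head.
by rewrite inE => /predU1P[->//|/Fb /le_trans/(_ (ltW Fba))].
Qed.

Section Lattice.
Variables (n : nat) (Om : seq (zpt n)).

Lemma zadj_znbrs (x y : zpt n) : y \in znbrs x -> zadj x y.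
Proof.
have addK (a c : int) : a - (a + c) = - c by ring.
have subK (a c : int) : a - (a - c) = c by ring.
rewrite /znbrs mem_cat => /orP[] /mapP[i _ ->]; rewrite /zadj (bigD1 i) //=;
  rewrite big1 ?addr0 => [|j ji]; rewrite !mxE ?eqxx /= ?addK ?subK ?normrN //;
  by rewrite (negbTE ji).
Qed.

Lemma zbdry_znbrs x y : x \in Om -> y \in znbrs x -> y \notin Om -> zbdry Om y.
Proof. by move=> xOm /zadj_znbrs xy yOm; rewrite /zbdry yOm; apply/hasP; exists x. Qed.

Lemma zclos_znbrs x y : x \in Om -> y \in znbrs x -> zclos Om y.
Proof.
move=> xOm xy; rewrite /zclos; case: (boolP (y \in Om)) => //= yOm.
exact: zbdry_znbrs xy yOm.
Qed.

Lemma zclos_mem x : x \in Om -> zclos Om x.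
Proof. by rewrite /zclos => ->. Qed.

Lemma zclos_bdry x : zbdry Om x -> zclos Om x.
Proof. by rewrite /zclos => ->; rewrite orbT. Qed.

Variable R : realType.
Implicit Types (w a b : zpt n -> R).

Lemma zlapB a b x : zlap (fun y => a y - b y) x = zlap a x - zlap b x.
Proof. by rewrite /zlap -sumrB; apply: eq_bigr => y _; ring. Qed.

Lemma zlap_cst (c : R) (x : zpt n) : zlap (fun _ => c) x = 0.
Proof. by rewrite /zlap big1 // => y _; rewrite subrr. Qed.

Lemma zlap_le0_at_max w x : x \in Om -> 0 < w x ->
  (forall y, zbdry Om y -> w y <= 0) -> (forall y, y \in Om -> w y <= w x) ->
  zlap w x <= 0.
Proof.
move=> xOm wx_gt0 wbd wmax; rewrite /zlap big_seq; apply: sumr_le0 => y xy.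
rewrite subr_le0; case: (boolP (y \in Om)) => [/wmax //|yOm].
exact: le_trans (wbd _ (zbdry_znbrs xOm xy yOm)) (ltW wx_gt0).
Qed.

Lemma zlap_max_principle w :
  (forall y, zbdry Om y -> w y <= 0) ->
  (forall x, x \in Om -> 0 < w x -> 0 < zlap w x) ->
  forall y, zclos Om y -> w y <= 0.
Proof.
move=> wbd wlap y /orP[yOm|/wbd//]; rewrite leNgt; apply/negP => wy_gt0.
have /(seq_argmax w)[x xOm wmax] : Om != [::] by apply: contraTneq yOm => ->.
have wx_gt0 : 0 < w x by apply: lt_le_trans wy_gt0 (wmax _ yOm).
by have := wlap x xOm wx_gt0; rewrite ltNge zlap_le0_at_max.
Qed.

Lemma zlap_comparison (K : R) a b : 0 < K ->
  (forall y, zbdry Om y -> a y <= b y) ->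
  (forall y, y \in Om -> zlap b y - K * b y <= zlap a y - K * a y) ->
  forall y, zclos Om y -> a y <= b y.
Proof.
move=> K_gt0 abd alap y ya; rewrite -subr_le0.
apply: (zlap_max_principle (w := fun y => a y - b y)) ya => [z /abd|z zOm].
  by rewrite subr_le0.
rewrite zlapB => abz; have := alap z zOm; have := mulr_gt0 K_gt0 abz; lra.
Qed.

End Lattice.

Section Reaction.
Variable R : realType.

Definition reaction (lambda t : R) : R := lambda * expR t * (expR t - 1).

Lemma reaction_gt0 lambda t : 0 < lambda -> 0 < t -> 0 < reaction lambda t.
Proof.
move=> l_gt0 t_gt0; rewrite /reaction !mulr_gt0 ?expR_gt0 //.
by rewrite subr_gt0 expR_gt1.
Qed.

(* Convexity, e^a >= e^b (1 + a - b), and e^b <= 1. *)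
Lemma expR_sub_le_nonpos (a b : R) : a <= b -> b <= 0 -> expR b - expR a <= b - a.
Proof.
move=> ab b_le0; have eb_le1 : expR b <= 1 by rewrite expR_le1.
have tangent : expR b * (1 + (a - b)) <= expR a.
  rewrite -[in leRHS](subrK b a) expRD mulrC ler_wpM2r ?expR_ge0 //.
  exact: expR_ge1Dx.
have : 0 <= (1 - expR b) * (b - a) by rewrite mulr_ge0 ?subr_ge0.
nra.
Qed.

Lemma reactionBK_nonincreasing (lambda K a b : R) : 0 < lambda -> 2 * lambda <= K ->
  a <= b -> b <= 0 -> reaction lambda b - K * b <= reaction lambda a - K * a.
Proof.
move=> l_gt0 lK ab b_le0; rewrite /reaction.
have eab : expR a <= expR b by rewrite ler_expR.
have ebB := expR_sub_le_nonpos ab b_le0.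
have eb_le1 : expR b <= 1 by rewrite expR_le1.
have ea_le1 : expR a <= 1 by rewrite expR_le1 (le_trans ab).
have sq : expR b ^+ 2 - expR a ^+ 2 <= 2 * (b - a).
  have : 0 <= (expR b - expR a) * (2 - expR b - expR a) by apply: mulr_ge0; lra.
  nra.
have l_ge0 := ltW l_gt0.
have : 0 <= lambda * (2 * (b - a) - (expR b ^+ 2 - expR a ^+ 2)).
  by rewrite mulr_ge0 ?subr_ge0.
have : 0 <= lambda * (expR b - expR a) by rewrite mulr_ge0 ?subr_ge0.
have : 0 <= (K - 2 * lambda) * (b - a) by rewrite mulr_ge0 ?subr_ge0.
nra.
Qed.

End Reaction.

Section Iteration.
Variables (R : realType) (n : nat) (Om : seq (zpt n)) (lambda K : R).
Variables (g : zpt n -> R) (u : nat -> zpt n -> R) (V : zpt n -> R).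
Hypothesis lambda_gt0 : 0 < lambda.
Hypothesis lambda_K : 2 * lambda < K.
Hypothesis g_ge0 : forall x, 0 <= g x.
Hypothesis u0 : forall x, zclos Om x -> u 0%N x = 0.
Hypothesis uS : forall k x, x \in Om ->
  zlap (u k.+1) x - K * u k.+1 x = reaction lambda (u k x) + g x - K * u k x.
Hypothesis uS_bdry : forall k x, zbdry Om x -> u k.+1 x = 0.
Hypothesis V_super : forall x, x \in Om ->
  reaction lambda (V x) + g x <= zlap V x.
Hypothesis V_bdry : forall x, zbdry Om x -> V x <= 0.

Let K_gt0 : 0 < K.
Proof. by apply: lt_trans lambda_K; rewrite mulr_gt0. Qed.

Lemma le_iterS k w v :
  (forall y, y \in Om -> v y <= u k y) -> (forall y, y \in Om -> u k y <= 0) ->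
  (forall y, zbdry Om y -> w y <= 0) ->
  (forall y, y \in Om -> reaction lambda (v y) + g y - K * v y <= zlap w y - K * w y) ->
  forall y, zclos Om y -> w y <= u k.+1 y.
Proof.
move=> vu u_le0 wbd wlap; apply: zlap_comparison K_gt0 _ _ => [y /[dup] /wbd|y yOm].
  by move=> + /uS_bdry ->.
have := reactionBK_nonincreasing lambda_gt0 (ltW lambda_K) (vu y yOm) (u_le0 y yOm).
by rewrite uS //; have := wlap y yOm; lra.
Qed.

Lemma iter_nonincreasing_nonpos k y : zclos Om y -> u k.+1 y <= u k y <= 0.
Proof.
elim: k y => [|k IH] y yclos.
  rewrite u0 // lexx andbT; apply: zlap_comparison K_gt0 _ _ y yclos.
    by move=> z /uS_bdry ->.
  move=> z zOm; rewrite uS // zlap_cst u0 ?zclos_mem //.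
  by rewrite /reaction expR0 subrr !mulr0 !subr0 add0r g_ge0.
have [uk_le uk_le0] := andP (IH y yclos); rewrite (le_trans uk_le uk_le0) andbT.
apply: (le_iterS (v := u k.+1)) yclos => [z|z|z /uS_bdry ->//|z zOm].
- by move/zclos_mem/IH/andP=> [].
- by move/zclos_mem/IH/andP=> [].
- by rewrite uS.
Qed.

Lemma supersolution_nonpos y : zclos Om y -> V y <= 0.
Proof.
apply: zlap_max_principle V_bdry _ y => x xOm Vx_gt0.
apply: lt_le_trans (V_super xOm).
exact: ltr_wpDr (g_ge0 x) (reaction_gt0 lambda_gt0 Vx_gt0).
Qed.

Lemma supersolution_le_iter k y : zclos Om y -> V y <= u k y.
Proof.
elim: k y => [|k IH] y yclos; first by rewrite u0 // supersolution_nonpos.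
have u_le0 z : z \in Om -> u k z <= 0.
  by move/zclos_mem/(iter_nonincreasing_nonpos k)/andP=> [].
apply: (le_iterS (v := V)) yclos => [z /zclos_mem/IH //|//|//|z zOm].
by rewrite lerD2r V_super.
Qed.

End Iteration.

Lemma nonincreasing_cvg_bounds (R : realType) (s : R ^nat) (l b : R) :
  (forall k, s k.+1 <= s k) -> s @ \oo --> l -> (forall k, b <= s k) ->
  (forall k, l <= s k) /\ b <= l.
Proof.
move=> s_noninc s_l s_ge; have <- := cvg_lim (@Rhausdorff R) s_l.
have s_cvg : cvgn s by apply/cvg_ex; exists l.
split; first by apply: nonincreasing_cvgn_ge => //; apply/nonincreasing_seqP.
by apply: limr_ge => //; apply: nearW.
Qed.

Theorem lemma3p3 (R : realType) (n M : nat) (lambda K : R)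
  (p : 'I_M -> zpt n) (nn : 'I_M -> nat) (Om0 Om : seq (zpt n))
  (u : nat -> zpt n -> R) (uOm : zpt n -> R) (V : zpt n -> R) :
  (2 <= n)%N -> 0 < lambda -> (0 < M)%N ->
  injective p -> (forall j, (0 < nn j)%N) ->
  (forall j, p j \in Om0) ->
  {subset Om0 <= Om} -> zconnected Om ->
  2 * lambda < K ->
  (* u_0 = 0 *)
  (forall x, zclos Om x -> u 0%N x = 0) ->
  (* u_k, k >= 1, solves the linear Dirichlet problem *)
  (forall k x, x \in Om ->
     zlap (u k.+1) x - K * u k.+1 x =
     lambda * expR (u k x) * (expR (u k x) - 1) + gsrc R p nn x - K * u k x) ->
  (forall k x, zbdry Om x -> u k.+1 x = 0) ->
  (* u_Omega is the pointwise limit *)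
  (forall x, zclos Om x -> (fun k => u k x) @ \oo --> uOm x) ->
  (* V is a supersolution *)
  (forall x, x \in Om ->
     zlap V x >= lambda * expR (V x) * (expR (V x) - 1) + gsrc R p nn x) ->
  (forall x, zbdry Om x -> V x <= 0) ->
  forall x, zclos Om x ->
    [/\ u 0%N x = 0,
        (forall k, u k.+1 x <= u k x),
        (forall k, uOm x <= u k x) &
        V x <= uOm x].
Proof.
move=> _ l_gt0 _ _ _ _ _ _ lK u0 uS uS_bdry u_lim V_super V_bdry x xclos.
have g_ge0 y : 0 <= gsrc R p nn y.
  by rewrite /gsrc !mulr_ge0 ?(ltW (pi_gt0 R)) ?sumr_ge0.
have u_noninc k : u k.+1 x <= u k x.
  by have /andP[] := iter_nonincreasing_nonpos l_gt0 lK g_ge0 u0 uS uS_bdry k xclos.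
have V_le k : V x <= u k x.
  exact: supersolution_le_iter l_gt0 lK g_ge0 u0 uS uS_bdry V_super V_bdry k x xclos.
have [uOm_le V_le_uOm] := nonincreasing_cvg_bounds u_noninc (u_lim x xclos) V_le.
by split; first exact: u0.
Qed.
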